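(* Let $c_0,c_1\ge0$ be arbitrary. Suppose $\varepsilon_0,\varepsilon_1$ are i.i.d. with mean zero, with a density, and symmetrically distributed around zero. Then the estimator is incentive compatible: for every $(\beta_0,\beta_1)\in\mathbb{R}^2$ and all $x,r\in\{0,1\}$, $$\mathbb{E}_\varepsilon\big[\hat f(x)-f(x)\big]^2\le \mathbb{E}_\varepsilon\big[\hat f(r)-f(x)\big]^2 .$$
   Context: Setting: an agent has a binary characteristic $x\in\{0,1\}$ and ideal action $f(x)=\beta_0+\beta_1x$, with unknown parameters $\beta=(\beta_0,\beta_1)$. A statistician observes $y_x=f(x)+\varepsilon_x$ for $x=0,1$, and computes $(b_0,b_1)$ solving $\min_{b_0,b_1}\sum_{x=0,1}(y_x-b_0-b_1x)^2+c_0\mathbf{1}_{b_1\neq0}+c_1|b_1|$, breaking indifference between including ($b_1\neq0$) and excluding ($b_1=0$) in favor of inclusion. Given the agent's report $r\in\{0,1\}$ the statistician takes the action $\hat f(r)=b_0+b_1r$; the agent's payoff is $-(\hat f(r)-f(x))^2$. The estimator is incentive compatible if the displayed inequality holds for every $\beta$ and all $x,r$. *)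

From HB Require Import structures.
From mathcomp Require Import all_boot all_order all_algebra.
From mathcomp Require Import all_classical all_reals all_analysis.
Set Implicit Arguments. Unset Strict Implicit. Unset Printing Implicit Defensive.
Import Order.TTheory GRing.Theory Num.Theory.
Import numFieldNormedType.Exports.
Local Open Scope classical_set_scope.
Local Open Scope ring_scope.

Definition objective {R : realType} (c0 c1 y0 y1 : R) (b : R * R) : R :=
  (y0 - b.1) ^+ 2 + (y1 - b.1 - b.2) ^+ 2
  + c0 * (b.2 != 0)%:R + c1 * `|b.2|.

(* b is "the" estimate: a minimizer of the objective, and indifference
   between inclusion (b1 <> 0) and exclusion (b1 = 0) is broken in favour
   of inclusion: b may exclude only if no including candidate does as well. *)
Definition is_estimate {R : realType} (c0 c1 y0 y1 : R) (b : R * R) : Prop :=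
  (forall b' : R * R, objective c0 c1 y0 y1 b <= objective c0 c1 y0 y1 b') /\
  (b.2 = 0 -> forall b' : R * R, b'.2 != 0 ->
     objective c0 c1 y0 y1 b < objective c0 c1 y0 y1 b').

Definition law {d} {T : measurableType d} {R : realType}
  (P : probability T R) (X : T -> R) (A : set R) : \bar R :=
  P (X @^-1` A).

Definition indep2 {d} {T : measurableType d} {R : realType}
  (P : probability T R) (X Y : T -> R) : Prop :=
  forall A B : set R, measurable A -> measurable B ->
    P (X @^-1` A `&` Y @^-1` B) = (P (X @^-1` A) * P (Y @^-1` B))%E.

Definition has_density {d} {T : measurableType d} {R : realType}
  (P : probability T R) (X : T -> R) : Prop :=
  exists f : R -> R, measurable_fun setT f /\ (forall x, 0 <= f x) /\
    forall A : set R, measurable A ->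
      law P X A = (\int[@lebesgue_measure R]_(x in A) (f x)%:E)%E.

Definition symmetric_law {d} {T : measurableType d} {R : realType}
  (P : probability T R) (X : T -> R) : Prop :=
  forall A : set R, measurable A -> law P X A = law P (fun w => - X w) A.

Definition mean_zero {d} {T : measurableType d} {R : realType}
  (P : probability T R) (X : T -> R) : Prop :=
  P.-integrable setT (EFin \o X) /\ (\int[P]_w (X w)%:E = 0)%E.

(* Profiling out the intercept, every estimate is b0 = (y0 + y1 - b1) / 2 with
   b1 = thresh (y1 - y0): soft thresholding at c1 combined with a hard cutoff
   coming from c0, an odd nondecreasing function.  The prediction errors of the
   truthful and of the false report are then functions of (e0, e1), and summing
   their squared difference over the four images of (e0, e1) under swapping and
   joint negation leaves a nonnegative multiple of
   beta1 * (thresh (beta1 + w) + thresh (beta1 - w)) >= 0.  As e0, e1 are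
   i.i.d. and symmetric, these four images all have the law mu \x mu, so the
   pointwise inequality integrates.  All integrands are nonnegative and the
   integrals live in \bar R. *)

From HB Require Import structures.
From mathcomp Require Import all_boot all_order all_algebra.
From mathcomp Require Import all_classical all_reals all_analysis.
From mathcomp Require Import measurable_realfun ring lra.
Set Implicit Arguments. Unset Strict Implicit. Unset Printing Implicit Defensive.
Import Order.TTheory GRing.Theory Num.Theory.
Local Open Scope classical_set_scope.
Local Open Scope ring_scope.

Section Threshold.
Variables (R : realType) (c0 c1 : R).

Definition slope_loss (D t : R) : R :=
  (D - t) ^+ 2 / 2 + c0 * (t != 0)%:R + c1 * `|t|.

(* The non-strict [<=] is the tie-break in favour of including the slope. *)
Definition thresh (D : R) : R :=
  if (c1 < `|D|) && (2 * c0 <= (`|D| - c1) ^+ 2) then D - Num.sg D * c1 else 0.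

Lemma objective_profile y0 y1 b0 b1 : objective c0 c1 y0 y1 (b0, b1) =
  2 * (b0 - (y0 + y1 - b1) / 2) ^+ 2 + slope_loss (y1 - y0) b1.
Proof. by rewrite /objective /slope_loss /=; field. Qed.

Lemma slope_lossN D t : slope_loss (- D) (- t) = slope_loss D t.
Proof. by rewrite /slope_loss oppr_eq0 normrN -opprD sqrrN. Qed.

Lemma slope_loss0 D : slope_loss D 0 = D ^+ 2 / 2.
Proof. by rewrite /slope_loss eqxx normr0 !mulr0 !addr0 subr0. Qed.

Lemma slope_loss_gt0 D t : 0 < t -> slope_loss D t = (D - t) ^+ 2 / 2 + c0 + c1 * t.
Proof. by move=> t_gt0; rewrite /slope_loss gt_eqF // mulr1 gtr0_norm. Qed.

Lemma threshN D : thresh (- D) = - thresh D.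
Proof.
rewrite /thresh normrN sgrN; case: ifP => _; last by rewrite oppr0.
by rewrite mulNr; ring.
Qed.

Lemma thresh_homo (c0_ge0 : 0 <= c0) (c1_ge0 : 0 <= c1) : {homo thresh : a b / a <= b}.
Proof.
move=> a b ab; rewrite /thresh.
have sg_norm (x : R) : [\/ Num.sg x = 1 /\ `|x| = x /\ 0 < x,
                    Num.sg x = -1 /\ `|x| = - x /\ x < 0 | x = 0].
  by have [x0|x0|->] := ltrgtP x 0; [constructor 2; rewrite ltr0_sg ?ltr0_norm
    | constructor 1; rewrite gtr0_sg ?gtr0_norm | constructor 3].
case: (sg_norm a) => [[-> [-> ?]]|[-> [-> ?]]|a0];
case: (sg_norm b) => [[-> [-> ?]]|[-> [-> ?]]|b0]; subst;
  rewrite ?sgr0 ?normr0 ?mul0r ?subr0;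
  repeat case: ifPn; rewrite ?negb_and -?ltNge -?leNgt;
  repeat match goal with |- is_true (_ && _) -> _ => case/andP => ? ?
         | |- is_true (_ || _) -> _ => case/orP => ? | |- _ -> _ => move=> ? end;
  try lra; nra.
Qed.

Lemma pos_slope_minimizerE (c0_ge0 : 0 <= c0) (c1_ge0 : 0 <= c1) (D b : R) :
  0 < b -> (forall t, slope_loss D b <= slope_loss D t) -> b = thresh D.
Proof.
move=> b_gt0 b_min.
have := b_min 0; rewrite slope_loss0 slope_loss_gt0 // => le_b0.
have : b * (b / 2 - D + c1) <= 0 by nra.
rewrite pmulr_rle0 // => b_le.
have c1_lt_D : c1 < D by lra.
have := b_min (D - c1); rewrite !slope_loss_gt0 ?subr_gt0 // => le_bD.
have : (b - (D - c1)) ^+ 2 == 0 by rewrite eq_le sqr_ge0 andbT; nra.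
rewrite sqrf_eq0 subr_eq0 => /eqP b_eq; subst b.
have D_gt0 : 0 < D by lra.
rewrite /thresh gtr0_norm // gtr0_sg // mul1r c1_lt_D /=.
by case: ifPn => // /negP[]; nra.
Qed.

Lemma zero_slope_minimizerE (c0_ge0 : 0 <= c0) (c1_ge0 : 0 <= c1) (D : R) :
  (forall t, t != 0 -> slope_loss D 0 < slope_loss D t) -> thresh D = 0.
Proof.
wlog D_ge0 : D / 0 <= D.
  move=> hwlog zero_min; have [D_ge0|D_lt0] := lerP 0 D; first exact: hwlog.
  apply: oppr_inj; rewrite -threshN oppr0; apply: hwlog; first lra.
  move=> t t0; rewrite -{1}oppr0 -[t]opprK !slope_lossN.
  by apply: zero_min; rewrite oppr_eq0.
move=> zero_min; rewrite /thresh ger0_norm //.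
case: ifPn => // /andP[c1_lt_D c0_le].
have D_gt0 : 0 < D by lra.
have := zero_min (D - c1); rewrite subr_eq0 gt_eqF // => /(_ isT).
by rewrite slope_loss0 slope_loss_gt0 ?subr_gt0 //; nra.
Qed.

Lemma slope_minimizerE (c0_ge0 : 0 <= c0) (c1_ge0 : 0 <= c1) (D b : R) :
  (forall t, slope_loss D b <= slope_loss D t) ->
  (b = 0 -> forall t, t != 0 -> slope_loss D b < slope_loss D t) ->
  b = thresh D.
Proof.
move=> b_min b_tie; have [b_lt0|b_gt0|b0] := ltrgtP b 0.
- apply: oppr_inj; rewrite -threshN.
  apply: pos_slope_minimizerE; rewrite ?oppr_gt0 // => t.
  by rewrite -[t]opprK !slope_lossN.
- exact: pos_slope_minimizerE.
- rewrite b0 zero_slope_minimizerE // => t t0.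
  by rewrite -b0; apply: b_tie.
Qed.

Lemma is_estimateE (c0_ge0 : 0 <= c0) (c1_ge0 : 0 <= c1) (y0 y1 : R) (b : R * R) :
  is_estimate c0 c1 y0 y1 b ->
  b = ((y0 + y1 - thresh (y1 - y0)) / 2, thresh (y1 - y0)).
Proof.
case: b => b0 b1 [/= b_min b_tie].
have slope_min t : slope_loss (y1 - y0) b1 <= slope_loss (y1 - y0) t.
  have := b_min ((y0 + y1 - t) / 2, t).
  rewrite !objective_profile subrr expr0n /= mulr0 add0r.
  by apply: le_trans; rewrite lerDr mulr_ge0 ?sqr_ge0.
have b1E : b1 = thresh (y1 - y0).
  apply: slope_minimizerE => // b10 t t0.
  have := b_tie b10 ((y0 + y1 - t) / 2, t) t0.
  rewrite !objective_profile subrr expr0n /= mulr0 add0r.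
  by apply: le_lt_trans; rewrite lerDr mulr_ge0 ?sqr_ge0.
have b0E : b0 = (y0 + y1 - b1) / 2.
  have := b_min ((y0 + y1 - b1) / 2, b1).
  rewrite !objective_profile subrr expr0n /= mulr0 add0r gerDr.
  rewrite pmulr_rle0 // => sq_le0.
  by apply/eqP; rewrite -subr_eq0 -sqrf_eq0 eq_le sq_le0 sqr_ge0.
by rewrite b0E b1E.
Qed.

End Threshold.

Section FlipSwap.
Variable R : realType.

Definition flip_swap (g : bool * bool) (p : R * R) : R * R :=
  let q := if g.2 then (p.2, p.1) else p in
  if g.1 then (- q.1, - q.2) else q.

Lemma mul_sum_odd_homo_ge0 (h : R -> R) :
  (forall x, h (- x) = - h x) -> {homo h : a b / a <= b} ->
  forall beta w : R, 0 <= beta * (h (beta + w) + h (beta - w)).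
Proof.
move=> hN h_homo beta w.
have -> : beta - w = - (w - beta) by rewrite opprB.
rewrite hN; have [beta_ge0|beta_lt0] := lerP 0 beta.
  by rewrite mulr_ge0 // subr_ge0 h_homo //; lra.
by apply: mulr_le0; [exact: ltW | rewrite subr_le0 h_homo //; lra].
Qed.

Variables (h : R -> R) (beta s : R).

(* With p = (e0, e1), h = thresh and s = 1 - 2 x, this is the squared error
   (fhat z - f x) ^+ 2 for a = - s when z = x and for a = s otherwise. *)
Definition sq_dev (a : R) (p : R * R) : R :=
  ((p.1 + p.2 + s * beta + a * h (beta + (p.2 - p.1))) / 2) ^+ 2.

Lemma measurable_sq_dev a : measurable_fun setT h -> measurable_fun setT (sq_dev a).
Proof.
move=> mh; apply/measurable_funX/measurable_funM => //.
apply: measurable_funD; first by apply: measurable_funD => //; apply: measurable_funD.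
apply: measurable_funM => //; apply: measurableT_comp mh _.
by apply: measurable_funD => //; apply: measurable_funB.
Qed.

Lemma flip_swap_sum_le :
  (forall x, h (- x) = - h x) -> {homo h : a b / a <= b} ->
  forall p, \sum_g sq_dev (- s) (flip_swap g p) <= \sum_g sq_dev s (flip_swap g p).
Proof.
move=> hN h_homo [u v].
have sum4 (F : bool * bool -> R) :
    \sum_g F g = F (true, true) + F (true, false) + F (false, true) + F (false, false).
  rewrite (eq_bigr (fun g => F (g.1, g.2))); last by case.
  by rewrite -(pair_bigA _ (fun a b => F (a, b))) /= !big_bool /= !addrA.
rewrite !sum4 /sq_dev /flip_swap /=.
have -> : - u - - v = - (u - v) by ring.
have -> : - v - - u = - (v - u) by ring.
have -> : u - v = - (v - u) by ring.
rewrite opprK.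
have := mulr_ge0 (sqr_ge0 s) (mul_sum_odd_homo_ge0 hN h_homo beta (v - u)).
set H1 := h (beta + (v - u)); set H2 := h (beta - (v - u)).
nra.
Qed.

End FlipSwap.

Section ProductLaw.
Local Open Scope ereal_scope.
Context d (T : measurableType d) (R : realType) (P : probability T R).
Context d1 d2 (T1 : measurableType d1) (T2 : measurableType d2).
Variables (mu : probability T1 R) (nu : probability T2 R).

Definition product_law (X : T -> T1) (Y : T -> T2) : Prop :=
  forall A B, measurable A -> measurable B ->
    P (X @^-1` A `&` Y @^-1` B) = mu A * nu B.

Lemma integral_product_law (X : T -> T1) (Y : T -> T2)
    (F : T1 * T2 -> \bar R) :
  measurable_fun setT X -> measurable_fun setT Y -> product_law X Y ->
  measurable_fun setT F -> (forall p, 0 <= F p) ->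
  \int[P]_w F (X w, Y w) = \int[mu \x nu]_p F p.
Proof.
move=> mX mY XY mF F0.
pose Z : {mfun T >-> (T1 * T2)%type} := HB.pack (fun w => (X w, Y w))
  (isMeasurableFun.Build _ _ _ _ _ (measurable_fun_pair mX mY)).
transitivity (\int[distribution P Z]_p F p); first by rewrite ge0_integral_distribution.
apply: eq_measure_integral => A mA _.
by apply/esym/product_measure_unique => // B C mB mC; apply: XY.
Qed.

Lemma le_integral_product_law_sum (I : finType) (X : I -> T -> T1) (Y : I -> T -> T2)
    (F G : T1 * T2 -> \bar R) :
  (0 < #|I|)%N ->
  (forall i, measurable_fun setT (X i)) -> (forall i, measurable_fun setT (Y i)) ->
  (forall i, product_law (X i) (Y i)) ->
  measurable_fun setT F -> measurable_fun setT G ->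
  (forall p, 0 <= F p) -> (forall p, 0 <= G p) ->
  (forall w, \sum_i F (X i w, Y i w) <= \sum_i G (X i w, Y i w)) ->
  \int[mu \x nu]_p F p <= \int[mu \x nu]_p G p.
Proof.
move=> I_gt0 mX mY XY mF mG F0 G0 FG.
have mcomp (H : (T1 * T2)%type -> \bar R) i : measurable_fun setT H ->
    measurable_fun setT (fun w => H (X i w, Y i w)).
  by move=> mH; exact: (measurableT_comp mH (measurable_fun_pair (mX i) (mY i))).
have integral_sum (H : (T1 * T2)%type -> \bar R) :
    measurable_fun setT H -> (forall p, 0 <= H p) ->
    \int[P]_w (\sum_i H (X i w, Y i w)) = #|I|%:R%:E * \int[mu \x nu]_p H p.
  move=> mH H0; rewrite ge0_integral_sum //; last by move=> i; exact: mcomp.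
  rewrite (eq_bigr _ (fun i _ => integral_product_law (mX i) (mY i) (XY i) mH H0)).
  by rewrite sumr_const mule_natl.
have le_sums :
    \int[P]_w (\sum_i F (X i w, Y i w)) <= \int[P]_w (\sum_i G (X i w, Y i w)).
  apply: ge0_le_integral => //.
  - by move=> w _; exact: sume_ge0.
  - by apply: emeasurable_sum => i; exact: mcomp.
  - by apply: emeasurable_sum => i; exact: mcomp.
by move: le_sums; rewrite !integral_sum // lee_pmul2l ?lte_fin ?ltr0n.
Qed.

End ProductLaw.

Section ProductLawTransform.
Local Open Scope ereal_scope.
Context d (T : measurableType d) (R : realType) (P : probability T R).

Lemma product_law_swap d1 d2 (T1 : measurableType d1) (T2 : measurableType d2)
    (mu : probability T1 R) (nu : probability T2 R) (X : T -> T1) (Y : T -> T2) :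
  product_law P mu nu X Y -> product_law P nu mu Y X.
Proof. by move=> XY A B mA mB; rewrite setIC XY // muleC. Qed.

Lemma measurable_oppr_preimage (A : set R) : measurable A -> measurable (-%R @^-1` A).
Proof. by move=> mA; rewrite -[_ @^-1` _]setTI; exact: oppr_measurable. Qed.

Lemma product_law_opp (mu nu : probability R R) (X Y : T -> R) :
  (forall A : set R, measurable A -> mu (-%R @^-1` A) = mu A) ->
  (forall A : set R, measurable A -> nu (-%R @^-1` A) = nu A) ->
  product_law P mu nu X Y -> product_law P mu nu (fun w => - X w)%R (fun w => - Y w)%R.
Proof.
move=> mu_sym nu_sym XY A B mA mB.
by rewrite -mu_sym // -nu_sym // -XY //; exact: measurable_oppr_preimage.
Qed.

End ProductLawTransform.

Section SymmetricIID.
Context d (T : measurableType d) (R : realType) (P : probability T R).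
Variables (mu : probability R R) (e0 e1 : T -> R).
Hypotheses (me0 : measurable_fun setT e0) (me1 : measurable_fun setT e1).
Hypothesis mu_sym : forall A : set R, measurable A -> mu (-%R @^-1` A) = mu A.
Hypothesis e01 : product_law P mu mu e0 e1.

Let flip_e g w := flip_swap g (e0 w, e1 w).

Lemma measurable_flip_e g : measurable_fun setT (fun w => (flip_e g w).1) /\
  measurable_fun setT (fun w => (flip_e g w).2).
Proof.
by case: g => [[] []]; split; rewrite /flip_e /flip_swap /=; try apply: measurable_funN.
Qed.

Lemma product_law_flip_e g :
  product_law P mu mu (fun w => (flip_e g w).1) (fun w => (flip_e g w).2).
Proof.
rewrite /flip_e /flip_swap; case: g => [[] []] /=.
- exact/product_law_opp/product_law_swap.
- exact/product_law_opp.
- exact/product_law_swap.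
- exact: e01.
Qed.

Lemma le_integral_sq_dev (h : R -> R) :
  (forall x, h (- x) = - h x) -> {homo h : a b / a <= b} -> forall beta s : R,
  (\int[P]_w (sq_dev h beta s (- s) (e0 w, e1 w))%:E
     <= \int[P]_w (sq_dev h beta s s (e0 w, e1 w))%:E)%E.
Proof.
move=> hN h_homo beta s.
have mh : measurable_fun setT h by exact: nondecreasing_measurable.
have mF (a : R) : measurable_fun setT (EFin \o sq_dev h beta s a).
  by apply/measurable_EFinP; exact: measurable_sq_dev.
have F0 (a : R) p : (0 <= (EFin \o sq_dev h beta s a) p)%E.
  by rewrite /= lee_fin sqr_ge0.
rewrite !(integral_product_law me0 me1 e01 (mF _) (F0 _)).
apply: (@le_integral_product_law_sum _ _ _ P _ _ _ _ _ _ (bool * bool)%type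
  (fun g w => (flip_e g w).1) (fun g w => (flip_e g w).2) _ _ _ _ _ _
  (mF _) (mF _) (F0 _) (F0 _)).
- by rewrite card_prod card_bool.
- by move=> g; case: (measurable_flip_e g).
- by move=> g; case: (measurable_flip_e g).
- exact: product_law_flip_e.
- move=> w; rewrite /= !sumEFin lee_fin.
  under eq_bigr do rewrite -surjective_pairing.
  under [leRHS]eq_bigr do rewrite -surjective_pairing.
  exact: flip_swap_sum_le.
Qed.

End SymmetricIID.

Unset Implicit Arguments.
Theorem proposition2 (R : realType) (c0 c1 : R) (hc0 : 0 <= c0) (hc1 : 0 <= c1)
  (est : R -> R -> R * R)
  (hest : forall y0 y1 : R, is_estimate c0 c1 y0 y1 (est y0 y1))
  (d : measure_display) (T : measurableType d) (P : probability T R)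
  (e0 e1 : T -> R)
  (me0 : measurable_fun setT e0) (me1 : measurable_fun setT e1)
  (hind : indep2 P e0 e1)
  (hid : forall A : set R, measurable A -> law P e0 A = law P e1 A)
  (hmean : mean_zero P e0)
  (hdens : has_density P e0)
  (hsym : symmetric_law P e0) :
  forall (beta0 beta1 : R) (x r : bool),
    let f := fun z : bool => beta0 + beta1 * (z : nat)%:R in
    let y0 := fun w => f false + e0 w in
    let y1 := fun w => f true + e1 w in
    let fhat := fun w (z : bool) =>
      (est (y0 w) (y1 w)).1 + (est (y0 w) (y1 w)).2 * (z : nat)%:R in
    (\int[P]_w ((fhat w x - f x) ^+ 2)%:E
       <= \int[P]_w ((fhat w r - f x) ^+ 2)%:E)%E.
Proof.
move=> beta0 beta1 x r; cbv zeta.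
set f := fun z : bool => _.
set y0 := fun w => f false + e0 w.
set y1 := fun w => f true + e1 w.
set fhat := fun w (z : bool) => (est (y0 w) (y1 w)).1 + (est (y0 w) (y1 w)).2 * z%:R.
pose mu := distribution P
  (HB.pack e0 (isMeasurableFun.Build _ _ _ _ _ me0) : {mfun T >-> R}).
have mu_sym (A : set R) : measurable A -> mu (-%R @^-1` A) = mu A.
  by move=> mA; exact: esym (hsym A mA).
have e01 : product_law P mu mu e0 e1.
  by move=> A B mA mB; rewrite hind //; congr (_ * _)%E; exact: esym (hid B mB).
have estE w : est (y0 w) (y1 w) =
    ((y0 w + y1 w - thresh c0 c1 (beta1 + (e1 w - e0 w))) / 2,
     thresh c0 c1 (beta1 + (e1 w - e0 w))).
  have <- : y1 w - y0 w = beta1 + (e1 w - e0 w) by rewrite /y0 /y1 /f /=; ring.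
  exact: (is_estimateE hc0 hc1 (hest (y0 w) (y1 w))).
pose s : R := if x then -1 else 1.
have devE z w : (fhat w z - f x) ^+ 2 =
    sq_dev (thresh c0 c1) beta1 s (if z == x then - s else s) (e0 w, e1 w).
  rewrite /fhat estE /sq_dev /s /y0 /y1 /f /=.
  by case: x {s} z => [] [] /=; congr (_ ^+ 2); field.
have [->|r_neq_x] := eqVneq r x; first exact: lexx.
under eq_integral => w _ do rewrite devE eqxx.
under [X in (_ <= X)%E]eq_integral => w _ do rewrite devE (negPf r_neq_x).
exact: (le_integral_sq_dev me0 me1 mu_sym e01 (threshN c0 c1) (thresh_homo hc0 hc1)
  beta1 s).
Qed.
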